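(* Let $\rho$ be a $3$-dimensional continuous representation of $\mathcal{G}_{\mathbb{Q}_p}$ over $\overline{\mathbb{F}_p}$ of the form $\begin{psmallmatrix}\chi_1&\delta_a&\epsilon\\&\chi_2&\delta_b\\&&\chi_3\end{psmallmatrix}$ in a basis $e_1,e_2,e_3$, with characters $\chi_1,\chi_2,\chi_3$ satisfying $\chi_i\chi_j^{-1}\notin\{1,\omega,\omega^{-1}\}$ for $i\neq j$. Then $\Lambda^2\rho$ has length $3$ with a composition series whose successive factors (from sub to quotient) are $\chi_1\chi_2$, $\chi_1\chi_3$, $\chi_2\chi_3$. Moreover the socle (resp. cosocle) of $\Lambda^2\rho$ has the same dimension as the cosocle (resp. socle) of $\rho$.
   Context: $\omega$ is the mod $p$ cyclotomic character of $\mathcal{G}_{\mathbb{Q}_p}$; $\delta_a,\delta_b,\epsilon$ denote the off-diagonal entries of the matrix representation. *)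

From HB Require Import structures.
From mathcomp Require Import all_boot all_order all_algebra all_field.
From mathcomp Require Import monoid.
Set Implicit Arguments. Unset Strict Implicit. Unset Printing Implicit Defensive.
Import GRing.Theory.
Local Open Scope ring_scope.

(* Representations are matrix-valued, column-vector convention:
   rho g acts on column vectors v |-> rho g *m v, and rho (g*h) = rho g *m rho h.
   Subspaces of F^n are encoded as row spaces (mxalgebra) of n x n matrices
   whose rows are the (transposed) vectors; rho g then acts on a row u by
   u |-> u *m (rho g)^T. *)

Section Reps.
Variables (G : groupType) (F : fieldType).

Definition is_rep n (rho : G -> 'M[F]_n) :=
  rho 1%g = 1%:M /\ forall g h, rho (g * h)%g = rho g *m rho h.

Definition is_char (chi : G -> F) :=
  chi 1%g = 1 /\ forall g h, chi (g * h)%g = chi g * chi h.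

Variables (n : nat) (rho : G -> 'M[F]_n).

Definition invariant (U : 'M[F]_n) := forall g, (U *m (rho g)^T <= U)%MS.

Definition simple_sub (U : 'M[F]_n) :=
  [/\ invariant U, (U != (0 : 'M[F]_n))%MS &
      forall W : 'M[F]_n, invariant W -> (W <= U)%MS -> (W == (0 : 'M[F]_n))%MS \/ (W == U)%MS].

Definition maximal_sub (U : 'M[F]_n) :=
  [/\ invariant U, ~~ (1%:M <= U)%MS &
      forall W : 'M[F]_n, invariant W -> (U <= W)%MS -> (W == U)%MS \/ (1%:M <= W)%MS].

Definition is_socle (S : 'M[F]_n) :=
  (forall U, simple_sub U -> (U <= S)%MS) /\
  exists s : seq 'M[F]_n,
    (forall U, U \in s -> simple_sub U) /\ (S == \sum_(U <- s) U)%MS.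

(* R is the radical: the intersection of all maximal proper subrepresentations;
   the cosocle is the quotient by R, of dimension n - \rank R *)
Definition is_radical (R : 'M[F]_n) :=
  (forall M, maximal_sub M -> (R <= M)%MS) /\
  exists s : seq 'M[F]_n,
    (forall M, M \in s -> maximal_sub M) /\ (R == \bigcap_(M <- s) M)%MS.

Definition socle_dim (d : nat) :=
  exists S, is_socle S /\ \rank S = d.

Definition cosocle_dim (d : nat) :=
  exists R, is_radical R /\ (n - \rank R)%N = d.

Definition char_factor (V' V : 'M[F]_n) (chi : G -> F) :=
  [/\ invariant V', invariant V, (V' <= V)%MS, \rank V = (\rank V').+1 &
      forall g, (V *m (rho g)^T - chi g *: V <= V')%MS].
End Reps.

(* The basis e1^e2, e1^e3, e2^e3 of Lambda^2 F^3 *)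
Definition wedge_idx (i : 'I_3) : 'I_3 * 'I_3 :=
  match val i with
  | 0 => (0, 1)
  | 1 => (0, 2)
  | _ => (1, 2)
  end%R.

(* matrix of Lambda^2 A in the basis above (column convention):
   A e_k ^ A e_l = sum_{i<j} (A_ik A_jl - A_il A_jk) e_i ^ e_j *)
Definition wedge2 (F : comNzRingType) (A : 'M[F]_3) : 'M[F]_3 :=
  \matrix_(r < 3, c < 3)
    (A (wedge_idx r).1 (wedge_idx c).1 * A (wedge_idx r).2 (wedge_idx c).2
     - A (wedge_idx r).1 (wedge_idx c).2 * A (wedge_idx r).2 (wedge_idx c).1).

Definition generic_pair (G : groupType) (F : fieldType) (omega a b : G -> F) :=
  [/\ (fun g => a g / b g) <> (fun _ => 1),
      (fun g => a g / b g) <> omega &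
      (fun g => a g / b g) <> (fun g => (omega g)^-1)].

From Pilot Require Import Defs.
From HB Require Import structures.
From mathcomp Require Import all_boot all_order all_algebra all_field.
From mathcomp Require Import monoid ring.
Set Implicit Arguments. Unset Strict Implicit. Unset Printing Implicit Defensive.
Import GRing.Theory.
Local Open Scope ring_scope.

(* With the Hodge star [P] of [F^3] one has [P (wedge2 A)^T P = adj A] for every
   3x3 matrix [A]; hence [wedge2 rho] is the contragredient of [rho] twisted by
   [det rho].  Taking annihilators (followed by [P]) is then an inclusion-reversing
   bijection from the subrepresentations of [rho] to those of [wedge2 rho] which
   complements dimensions, so it exchanges simple and maximal subrepresentations,
   and thus socles and radicals.  Since [wedge2 rho] is again upper triangular, with
   diagonal [chi1 chi2, chi1 chi3, chi2 chi3], its standard flag is the required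
   composition series. *)

Record rep_duality (G : groupType) (F : fieldType) n (sg tau : G -> 'M[F]_n)
    (phi psi : 'M[F]_n -> 'M[F]_n) : Prop := RepDuality {
  dual_phiS : forall U V, (U <= V)%MS -> (phi V <= phi U)%MS;
  dual_psiS : forall U V, (U <= V)%MS -> (psi V <= psi U)%MS;
  dual_phiK : forall V, (phi (psi V) == V)%MS;
  dual_psiK : forall U, (psi (phi U) == U)%MS;
  dual_phi_invariant : forall U, Defs.invariant sg U -> Defs.invariant tau (phi U);
  dual_psi_invariant : forall V, Defs.invariant tau V -> Defs.invariant sg (psi V);
  mxrank_dual_phi : forall U, \rank (phi U) = (n - \rank U)%N;
  mxrank_dual_psi : forall V, \rank (psi V) = (n - \rank V)%N }.

Lemma rep_duality_sym (G : groupType) (F : fieldType) n (sg tau : G -> 'M[F]_n)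
    phi psi :
  rep_duality sg tau phi psi -> rep_duality tau sg psi phi.
Proof. by case=> *; constructor. Qed.

Section DualLattice.
Variables (G : groupType) (F : fieldType) (n : nat).
Variables (sg tau : G -> 'M[F]_n) (phi psi : 'M[F]_n -> 'M[F]_n).
Hypothesis D : rep_duality sg tau phi psi.
Implicit Types U V : 'M[F]_n.

Lemma dual_sub_phi U V : (V <= phi U)%MS = (U <= psi V)%MS.
Proof.
apply/idP/idP => [/(dual_psiS D) | /(dual_phiS D)]; apply: submx_trans.
  by case/andP: (dual_psiK D U).
by case/andP: (dual_phiK D V).
Qed.

Lemma dual_phi_sub U V : (phi U <= V)%MS = (psi V <= U)%MS.
Proof.
apply/idP/idP => [/(dual_psiS D) | /(dual_phiS D)] => h; apply: submx_trans h _.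
  by case/andP: (dual_psiK D U).
by case/andP: (dual_phiK D V).
Qed.

Lemma dual_phi_eqmx U V : (U :=: V)%MS -> (phi U :=: phi V)%MS.
Proof.
by move=> eqUV; apply/eqmxP/andP; split; apply: (dual_phiS D); rewrite eqUV.
Qed.

Lemma dual_phi_full U : (1%:M <= phi U)%MS = (U == 0).
Proof.
rewrite sub1mx /row_full (mxrank_dual_phi D) -mxrank_eq0.
have := rank_leq_col U; case: (\rank U) => [|r] r_le_n; first by rewrite subn0 !eqxx.
by apply/negbTE; rewrite neq_ltn ltn_subrL (leq_ltn_trans (leq0n r) r_le_n).
Qed.

Lemma dual_phi_eq0 U : (phi U == 0) = (1%:M <= U)%MS.
Proof.
rewrite -mxrank_eq0 (mxrank_dual_phi D) sub1mx /row_full.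
by rewrite subn_eq0 eqn_leq rank_leq_col.
Qed.

Lemma dual_phi_sum (s : seq 'M[F]_n) :
  (phi (\sum_(U <- s) U)%MS :=: \bigcap_(U <- s) phi U)%MS.
Proof.
apply/eqmxP; elim: s => [|U s /andP[IH1 IH2]]; rewrite ?big_nil ?big_cons.
  by rewrite submx1 dual_phi_full eqxx.
apply/andP; split.
  rewrite sub_capmx (dual_phiS D) ?addsmxSl //=.
  exact: submx_trans (dual_phiS D (addsmxSr _ _)) IH1.
rewrite dual_sub_phi addsmx_sub -!dual_sub_phi capmxSl /=.
exact: submx_trans (capmxSr _ _) IH2.
Qed.

Lemma dual_phi_bigcap (s : seq 'M[F]_n) :
  (phi (\bigcap_(U <- s) U)%MS :=: \sum_(U <- s) phi U)%MS.
Proof.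
apply/eqmxP; elim: s => [|U s /andP[IH1 IH2]]; rewrite ?big_nil ?big_cons.
  by rewrite sub0mx andbT submx0 dual_phi_eq0.
apply/andP; split.
  rewrite dual_phi_sub sub_capmx -!dual_phi_sub addsmxSl /=.
  exact: submx_trans IH1 (addsmxSr _ _).
rewrite addsmx_sub (dual_phiS D) ?capmxSl //=.
exact: submx_trans IH2 (dual_phiS D (capmxSr _ _)).
Qed.
End DualLattice.

Section DualSimple.
Variables (G : groupType) (F : fieldType) (n : nat).
Variables (sg tau : G -> 'M[F]_n) (phi psi : 'M[F]_n -> 'M[F]_n).
Hypothesis D : rep_duality sg tau phi psi.
Let D' := rep_duality_sym D.

Lemma dual_simple_maximal U : simple_sub sg U -> maximal_sub tau (phi U).
Proof.
case=> invU nzU minU; split; first exact: (dual_phi_invariant D).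
  by rewrite (dual_phi_full D).
move=> W invW phiUW; rewrite (dual_phi_sub D) in phiUW.
case: (minU _ (dual_psi_invariant D invW) phiUW) => [| /eqmxP psiWU].
  by rewrite sub0mx andbT submx0 (dual_phi_eq0 D'); right.
left; apply/eqmxP/(eqmx_trans _ (dual_phi_eqmx D psiWU))/eqmx_sym/eqmxP.
exact: (dual_phiK D).
Qed.

Lemma dual_maximal_simple V : maximal_sub tau V -> simple_sub sg (psi V).
Proof.
case=> invV nfV maxV; split; first exact: (dual_psi_invariant D).
  by rewrite (dual_phi_eq0 D').
move=> W invW WpsiV; rewrite -(dual_sub_phi D) in WpsiV.
case: (maxV _ (dual_phi_invariant D invW) WpsiV) => [/eqmxP phiWV | ].
  right; apply/eqmxP/(eqmx_trans _ (dual_phi_eqmx D' phiWV))/eqmx_sym/eqmxP.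
  exact: (dual_psiK D).
by rewrite (dual_phi_full D) => /eqP->; left; rewrite submx_refl.
Qed.
End DualSimple.

Section DualSocle.
Variables (G : groupType) (F : fieldType) (n : nat).
Variables (sg tau : G -> 'M[F]_n) (phi psi : 'M[F]_n -> 'M[F]_n).
Hypothesis D : rep_duality sg tau phi psi.
Let D' := rep_duality_sym D.

Lemma dual_socle S : is_socle sg S -> is_radical tau (phi S).
Proof.
case=> simple_le [s [simple_s /eqmxP defS]]; split.
  by move=> M /(dual_maximal_simple D)/simple_le; rewrite (dual_phi_sub D).
exists (map phi s); split.
  by move=> _ /mapP[U sU ->]; apply/(dual_simple_maximal D)/simple_s.
rewrite big_map; apply/eqmxP.
exact: eqmx_trans (dual_phi_eqmx D defS) (dual_phi_sum D s).
Qed.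

Lemma dual_radical R : is_radical sg R -> is_socle tau (phi R).
Proof.
case=> le_maximal [s [maximal_s /eqmxP defR]]; split.
  by move=> U /(dual_simple_maximal D')/le_maximal; rewrite (dual_sub_phi D).
exists (map phi s); split.
  by move=> _ /mapP[M sM ->]; apply/(dual_maximal_simple D')/maximal_s.
rewrite big_map; apply/eqmxP.
exact: eqmx_trans (dual_phi_eqmx D defR) (dual_phi_bigcap D s).
Qed.

Lemma socle_dim_dual d : socle_dim sg d -> cosocle_dim tau d.
Proof.
case=> S [socS <-]; exists (phi S); split; first exact: dual_socle.
by rewrite (mxrank_dual_phi D) subKn ?rank_leq_col.
Qed.

Lemma cosocle_dim_dual d : cosocle_dim sg d -> socle_dim tau d.
Proof.
case=> R [radR <-]; exists (phi R); split; first exact: dual_radical.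
exact: (mxrank_dual_phi D).
Qed.
End DualSocle.

Definition annmx (F : fieldType) m n (U : 'M[F]_(m, n)) : 'M[F]_n := kermx U^T.

Section Annihilator.
Variables (F : fieldType) (n : nat).

Lemma annmxS m1 m2 (U : 'M[F]_(m1, n)) (V : 'M[F]_(m2, n)) :
  (U <= V)%MS -> (annmx V <= annmx U)%MS.
Proof.
by case/submxP=> X ->; apply/sub_kermxP; rewrite trmx_mul mulmxA mulmx_ker mul0mx.
Qed.

Lemma mxrank_annmx m (U : 'M[F]_(m, n)) : \rank (annmx U) = (n - \rank U)%N.
Proof. by rewrite mxrank_ker mxrank_tr. Qed.

Lemma annmxK m (U : 'M[F]_(m, n)) : (annmx (annmx U) :=: U)%MS.
Proof.
have sUU : (U <= annmx (annmx U))%MS.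
  by apply/sub_kermxP/trmx_inj; rewrite trmx_mul trmxK mulmx_ker trmx0.
apply: eqmx_sym; apply/eqmxP.
by rewrite -(mxrank_leqif_eq sUU).2 !mxrank_annmx subKn ?rank_leq_col.
Qed.

Lemma annmx_stable m (U : 'M[F]_(m, n)) (B : 'M[F]_n) :
  (U *m B^T <= U)%MS -> (annmx U *m B <= annmx U)%MS.
Proof.
case/submxP=> X UBX; apply/sub_kermxP.
by rewrite -mulmxA -[B]trmxK -trmx_mul UBX trmx_mul mulmxA mulmx_ker mul0mx.
Qed.
End Annihilator.

(* The twist hypothesis says that [tau g] is conjugate (by [M^T]) to a nonzero
   multiple of [(sg g^-1)^T], i.e. [tau] is a twist of the contragredient of [sg]. *)
Lemma annmx_duality (G : groupType) (F : fieldType) n (sg tau : G -> 'M[F]_n)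
    (M : 'M[F]_n) :
  M \in unitmx ->
  (forall g, exists2 c, c != 0 & M *m (tau g)^T = c *: (sg (g^-1)%g *m M)) ->
  rep_duality sg tau (fun U => annmx U *m M) (fun V => annmx (V *m invmx M)).
Proof.
move=> unitM twist; constructor.
- by move=> U V /annmxS; apply: submxMr.
- by move=> U V /(submxMr (invmx M))/annmxS.
- move=> V; apply/eqmxP/(eqmx_trans (eqmxMr M (annmxK _))).
  by rewrite mulmxKV.
- by move=> U; apply/eqmxP; rewrite mulmxK //; apply: annmxK.
- move=> U invU g; have [c c0 tauE] := twist g.
  rewrite -mulmxA tauE -scalemxAr eqmx_scale // mulmxA.
  exact/submxMr/annmx_stable/invU.
- move=> V invV g; apply: annmx_stable; rewrite trmxK.
  have [c c0 tauE] := twist (g^-1)%g; rewrite invgK in tauE.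
  have -> : sg g = c^-1 *: (M *m (tau (g^-1)%g)^T *m invmx M).
    by rewrite tauE -scalemxAl mulmxK // scalerA mulVf // scale1r.
  rewrite -scalemxAr eqmx_scale ?invr_eq0 // !mulmxA mulmxKV //.
  exact/submxMr/invV.
- by move=> U; rewrite mxrankMfree ?row_free_unit // mxrank_annmx.
- by move=> V; rewrite mxrank_annmx mxrankMfree // row_free_unit unitmx_inv.
Qed.

Lemma mul_pid_mxE (R : nzRingType) n r (X : 'M[R]_n) i j :
  (pid_mx r *m X) i j = (i < r)%:R * X i j.
Proof.
rewrite mxE (bigD1 i) //= big1 ?addr0 => [|l /negPf li]; first by rewrite mxE eqxx.
by rewrite mxE eq_sym val_eqE li mul0r.
Qed.

Lemma mulmx_pidE (R : nzRingType) n r (X : 'M[R]_n) i j :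
  (X *m pid_mx r) i j = X i j * (j < r)%:R.
Proof.
rewrite mxE (bigD1 j) //= big1 ?addr0 => [|l /negPf lj]; first by rewrite mxE eqxx.
by rewrite mxE val_eqE lj mulr0.
Qed.

Lemma sub_pid_mx (F : fieldType) n r (X : 'M[F]_n) :
  (forall i (j : 'I_n), (r <= j)%N -> X i j = 0) ->
  (X <= (pid_mx r : 'M_n))%MS.
Proof.
move=> X0; suff <- : X *m (pid_mx r : 'M_n) = X by apply: submxMl.
apply/matrixP=> i j; rewrite mulmx_pidE.
by case: (ltnP j r) => [|/X0->]; rewrite ?mulr1 ?mul0r.
Qed.

Section TriangularRep.
Variables (G : groupType) (F : fieldType) (n : nat) (tau : G -> 'M[F]_n).
Hypothesis tau_trig : forall g, is_trig_mx (tau g)^T.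

Lemma trig_rep_entry g (i j : 'I_n) : (i < j)%N -> tau g j i = 0.
Proof. by move=> ij; have := is_trig_mxP (tau_trig g) i j ij; rewrite mxE. Qed.

Lemma trig_invariant_pid_mx r : Defs.invariant tau (pid_mx r).
Proof.
move=> g; apply: sub_pid_mx => i j rj; rewrite mul_pid_mxE mxE.
case: ltnP => [ir|_]; last by rewrite mul0r.
by rewrite trig_rep_entry ?mulr0 // (leq_trans ir rj).
Qed.

Lemma trig_char_factor (k : 'I_n) (chi : G -> F) :
  (forall g, tau g k k = chi g) -> char_factor tau (pid_mx k) (pid_mx k.+1) chi.
Proof.
move=> diag; split; try exact: trig_invariant_pid_mx.
- apply: sub_pid_mx => i j kj; rewrite mxE.
  by case: eqP => //= ->; rewrite ltnNge ltnW.
- by rewrite !rank_pid_mx // ltnW.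
move=> g; apply: sub_pid_mx => i j; rewrite !(mul_pid_mxE, mxE).
case: (ltngtP i j) => [ij|ji|/val_inj <-] kj.
- by rewrite trig_rep_entry // mulr0 mulr0 subrr.
- by rewrite ltnS leqNgt (leq_ltn_trans kj ji) /= mul0r mulr0 subrr.
rewrite /=; case: ltnP => [ik|]; last by rewrite mul0r mulr0 subrr.
suff -> : i = k by rewrite diag mulr1 mul1r subrr.
by apply/val_inj/eqP; rewrite eqn_leq -ltnS ik kj.
Qed.
End TriangularRep.

Lemma upper_trig3 (R : nzRingType) (A : 'M[R]_3) :
  A 1 0 = 0 -> A 2 0 = 0 -> A 2 1 = 0 -> is_trig_mx A^T.
Proof.
move=> a10 a20 a21; apply/is_trig_mxP => i j; rewrite mxE.
case: i j => [[|[|[|//]]] ?] [[|[|[|//]]] ?] //= _;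
  [rewrite -a10 | rewrite -a20 | rewrite -a21]; by congr (A _ _); apply: val_inj.
Qed.

Lemma wedge2_trig (R : comNzRingType) (A : 'M[R]_3) :
  is_trig_mx A^T -> is_trig_mx (wedge2 A)^T.
Proof.
move/is_trig_mxP=> Alow.
have Aij (i j : 'I_3) : (i < j)%N -> A j i = 0 by move/Alow; rewrite mxE.
have a10 := Aij 0 1 isT; have a20 := Aij 0 2 isT; have a21 := Aij 1 2 isT.
apply/is_trig_mxP => i j; rewrite !mxE.
by case: i j => [[|[|[|//]]] ?] [[|[|[|//]]] ?] //= _;
  rewrite ?a10 ?a20 ?a21 ?mulr0 ?mul0r ?subrr.
Qed.

Lemma wedge2_diag (R : comNzRingType) (A : 'M[R]_3) : is_trig_mx A^T ->
  [/\ wedge2 A 0 0 = A 0 0 * A 1 1, wedge2 A 1 1 = A 0 0 * A 2 2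
    & wedge2 A 2 2 = A 1 1 * A 2 2].
Proof.
move/is_trig_mxP=> Alow.
have Aij (i j : 'I_3) : (i < j)%N -> A j i = 0 by move/Alow; rewrite mxE.
by rewrite !mxE /= (Aij 0 1) ?(Aij 0 2) ?(Aij 1 2) // !mulr0 !subr0.
Qed.

Definition hodge_mx (R : nzRingType) : 'M[R]_3 :=
  \matrix_(i, j) (if (i + j == 2)%N then (-1) ^+ i else 0).

Lemma hodge_mxK (R : nzRingType) : hodge_mx R *m hodge_mx R = 1%:M.
Proof.
apply/matrixP=> i j; rewrite !mxE !big_ord_recr big_ord0 /= !mxE.
by case: i j => [[|[|[|//]]] ?] [[|[|[|//]]] ?];
  rewrite /= ?(mul0r, mulr0, add0r, addr0, expr0, expr1, sqrrN, expr1n, mulrNN, mulr1).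
Qed.

Lemma hodge_wedge2 (R : comNzRingType) (A : 'M[R]_3) :
  hodge_mx R *m (wedge2 A)^T *m hodge_mx R = \adj A.
Proof.
(* Indexing every entry as [A (inord i) (inord j)] with [i j : nat] lets the
   case analysis below compute the indices, so that [ring] sees equal entries. *)
pose a (i j : nat) := A (inord i) (inord j).
have AE i j : A i j = a i j by rewrite /a !inord_val.
have mod1 : (1 %% 3 = 1)%N by [].
have mod2 : ((1 %% 3 + 1 %% 3) %% 3 = 2)%N by [].
apply/matrixP=> i j; rewrite !mxE /cofactor (expand_det_row _ 0).
do 3 rewrite ?big_ord_recr ?big_ord0 /= ?det_mx11 ?mxE /cofactor.
rewrite !AE /= ?mod1 ?mod2.
by case: i j => [[|[|[|//]]] ?] [[|[|[|//]]] ?] /=; rewrite ?mod1 ?mod2; ring.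
Qed.

Lemma wedge2_rep_twist (G : groupType) (F : fieldType) (rho : G -> 'M[F]_3) :
  is_rep rho -> forall g, exists2 c, c != 0 &
    hodge_mx F *m (wedge2 (rho g))^T = c *: (rho (g^-1)%g *m hodge_mx F).
Proof.
case=> rho1 rhoM g.
have rhoV : rho g *m rho (g^-1)%g = 1%:M by rewrite -rhoM mulgV rho1.
exists (\det (rho g)); first by rewrite -unitfE -unitmxE; case: (mulmx1_unit rhoV).
rewrite -[LHS]mulmx1 -hodge_mxK mulmxA hodge_wedge2.
by rewrite -[\adj _]mulmx1 -rhoV mulmxA mul_adj_mx mul_scalar_mx scalemxAl.
Qed.

Theorem mainTheorem10 (G : groupType) (F : closedFieldType) (p : nat)
  (hp : prime p) (hcharF : p \in [pchar F])
  (omega : G -> F) (homega : is_char omega)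
  (rho : G -> 'M[F]_3) (hrho : is_rep rho)
  (chi1 chi2 chi3 : G -> F)
  (hchi1 : is_char chi1) (hchi2 : is_char chi2) (hchi3 : is_char chi3)
  (hform : forall g : G,
     [/\ rho g 0 0 = chi1 g, rho g 1 1 = chi2 g & rho g 2 2 = chi3 g] /\
     [/\ rho g 1 0 = 0, rho g 2 0 = 0 & rho g 2 1 = 0])
  (h12 : generic_pair omega chi1 chi2) (h21 : generic_pair omega chi2 chi1)
  (h13 : generic_pair omega chi1 chi3) (h31 : generic_pair omega chi3 chi1)
  (h23 : generic_pair omega chi2 chi3) (h32 : generic_pair omega chi3 chi2) :
  let L := fun g : G => wedge2 (rho g) in
  [/\ exists V1 V2 : 'M[F]_3,
        [/\ char_factor L 0 V1 (fun g => chi1 g * chi2 g),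
            char_factor L V1 V2 (fun g => chi1 g * chi3 g) &
            char_factor L V2 1%:M (fun g => chi2 g * chi3 g)],
      (forall d : nat, socle_dim L d <-> cosocle_dim rho d) &
      (forall d : nat, cosocle_dim L d <-> socle_dim rho d)].
Proof.
move=> L.
have rho_trig g : is_trig_mx (rho g)^T.
  by have [_ [r10 r20 r21]] := hform g; apply: upper_trig3 r10 r20 r21.
have L_trig g : is_trig_mx (L g)^T := wedge2_trig (rho_trig g).
have L_diag g : [/\ L g 0 0 = chi1 g * chi2 g, L g 1 1 = chi1 g * chi3 g
                  & L g 2 2 = chi2 g * chi3 g].
  by have [[<- <- <-] _] := hform g; apply: wedge2_diag.
have D : rep_duality rho L (fun U => annmx U *m hodge_mx F)
                           (fun V => annmx (V *m invmx (hodge_mx F))).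
  apply: annmx_duality (wedge2_rep_twist hrho).
  by case: (mulmx1_unit (hodge_mxK F)).
have D' := rep_duality_sym D.
split=> [|d|d]; last 2 first.
- by split; [exact: (socle_dim_dual D') | exact: (cosocle_dim_dual D)].
- by split; [exact: (cosocle_dim_dual D') | exact: (socle_dim_dual D)].
exists (pid_mx 1), (pid_mx 2); split.
- rewrite -(pid_mx_0 _ 3 3); apply: (trig_char_factor L_trig (k := 0)) => g.
  by case: (L_diag g).
- by apply: (trig_char_factor L_trig (k := 1)) => g; case: (L_diag g).
- rewrite -(pid_mx_1 _ 3); apply: (trig_char_factor L_trig (k := 2)) => g.
  by case: (L_diag g).
Qed.
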